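(* Let $D$ be a locatable digraph of order $n$ with $\gamma_{OL}(D)=n$. Let $x$ be an arbitrary vertex of $D$ and let $D'$ be the digraph obtained from $D$ by deleting all non-forcing arcs of $D$ whose tail is $x$. Then $D'$ is locatable and $\gamma_{OL}(D')=n$. Moreover, if $x$ is not location-forced in $D$, then $D$ and $D'$ have the same sets of forcing arcs.
   Context: Digraphs are finite and may contain loops; between two distinct vertices there may be arcs in one or both directions, no repeated arcs. $N^-(v)=\{u: uv\text{ is an arc}\}$ (contains $v$ iff $v$ has a loop). An OLD set of $D$ is a set $S\subseteq V(D)$ such that every vertex has an in-neighbour in $S$ and for every two distinct vertices $u,w$ some vertex of $S$ lies in exactly one of $N^-(u),N^-(w)$. $D$ is locatable if it has an OLD set, and then $\gamma_{OL}(D)$ is the minimum size of an OLD set. A vertex $v$ is location-forced if there are distinct vertices $y,z$ with $N^-(y)\ominus N^-(z)=\{v\}$ ($\ominus$ = symmetric difference). An arc $uy$ (possibly a loop) of a locatable digraph is a forcing arc if either $N^-(y)=\{u\}$, or there is a vertex $z$ with $N^-(z)=N^-(y)\setminus\{u\}$. *)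

From mathcomp Require Import all_boot.
Set Implicit Arguments. Unset Strict Implicit. Unset Printing Implicit Defensive.

(* A digraph on the finite vertex type T is an arc relation a : rel T;
   a u v means uv is an arc (loops allowed: a v v). *)
Section Digraphs.
Variable T : finType.
Implicit Types (a : rel T) (S : {set T}).

Definition inN a (v : T) : {set T} := [set u | a u v].

Definition symdiff (A B : {set T}) : {set T} := (A :\: B) :|: (B :\: A).

Definition is_OLD a S : bool :=
  [forall v, exists u in S, a u v] &&
  [forall u, forall w, (u != w) ==>
      [exists s in S, (s \in inN a u) != (s \in inN a w)]].

Definition locatable a : Prop := exists S, is_OLD a S.

(* minimum size of an OLD set (meaningful when a is locatable) *)
Definition gammaOL a : nat :=
  \big[minn/#|T|.+1]_(S : {set T} | is_OLD a S) #|S|.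

Definition location_forced a (v : T) : Prop :=
  exists y z, y != z /\ symdiff (inN a y) (inN a z) = [set v].

Definition forcing_arc a (u y : T) : Prop :=
  a u y /\ (inN a y = [set u] \/ exists z, inN a z = inN a y :\ u).

Definition forcing_arcb a (u y : T) : bool :=
  a u y && ((inN a y == [set u]) || [exists z, inN a z == inN a y :\ u]).

Definition delete_nonforcing_out a (x : T) : rel T :=
  fun u y => a u y && ((u != x) || forcing_arcb a u y).

End Digraphs.

From HB Require Import structures.
From mathcomp Require Import all_boot zify.
Set Implicit Arguments. Unset Strict Implicit. Unset Printing Implicit Defensive.

(* With gamma_OL(D) = n the only OLD set is V, so every vertex v is critical:
   two members of the family {∅} ∪ {N^-(y)} differ in v alone.  Deleting the
   non-forcing arcs out of x removes x from an in-neighbourhood N exactly when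
   N \ x is not already a member; this keeps the members distinct and keeps
   every vertex critical.  When x is not location-forced, the forcing arcs out
   of x enter only vertices with N^-(y) = {x}, and the forcing arcs uy with
   u <> x are unchanged by a counting argument: in a family of at most n + 1
   sets in which every vertex is critical, Bondy's theorem leaves room, once u
   is deleted, for a single pair of members differing in x alone, namely ∅
   and {x}. *)

Section ImsetCard.
Variables (aT rT : finType) (f : aT -> rT).

Lemma card_imset_lt (X : {set aT}) A B :
  A \in X -> B \in X -> A != B -> f A = f B -> #|f @: X| < #|X|.
Proof.
move=> AX BX AB fAB; rewrite ltn_neqAle leq_imset_card andbT.
by apply: contra AB => /imset_injP inj; apply/eqP/inj.
Qed.

Lemma card_imset_lt2 (X : {set aT}) A B C D :
    A \in X -> B \in X -> C \in X -> D \in X -> A != B -> C != D ->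
  f A = f B -> f C = f D -> f A != f C -> #|f @: X|.+1 < #|X|.
Proof.
move=> AX BX CX DX AB CD fAB fCD fAC.
have sub_fXA : f @: X \subset f @: (X :\ A).
  apply/subsetP=> _ /imsetP[E EX ->]; have [->|EA] := eqVneq E A.
    by rewrite fAB imset_f // !inE eq_sym AB.
  by rewrite imset_f // !inE EA.
have XA E : E \in X -> f E != f A -> E \in X :\ A.
  by move=> EX fEA; rewrite !inE EX andbT; apply: contra_neq fEA => ->.
have := card_imset_lt (XA _ CX _) (XA _ DX _) CD fCD.
rewrite -fCD !(eq_sym (f C)) fAC (cardsD1 A X) AX => /(_ isT isT).
by have := subset_leq_card sub_fXA; lia.
Qed.

End ImsetCard.

Section Families.
Variable T : finType.
Implicit Types (P Q : {set T}) (F G : {set {set T}}) (W : {set T}).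

Lemma setD1C P u v : P :\ u :\ v = P :\ v :\ u.
Proof. by rewrite !setDDl setUC. Qed.

Lemma setD1_eq P Q v : P :\ v = Q :\ v -> (v \in P) = (v \in Q) -> P = Q.
Proof.
move=> /setP PQv vPQ; apply/setP=> s; have [->//|sv] := eqVneq s v.
by have := PQv s; rewrite !inE sv.
Qed.

Lemma setD1_id P v : v \notin P -> P :\ v = P.
Proof. by move=> vP; apply/setDidPl; rewrite disjoint_sym disjoints1. Qed.

Definition twins v P Q := P != Q /\ P :\ v = Q :\ v.

Lemma twins_sym v P Q : twins v P Q -> twins v Q P.
Proof. by case=> PQ PQv; split; rewrite 1?eq_sym. Qed.

Lemma twins_mem v P Q : twins v P Q -> (v \in Q) = (v \notin P).
Proof.
case=> PQ /setD1_eq eqPQ.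
by case: (v \in P) (v \in Q) eqPQ => [] [] // /(_ erefl) E; rewrite E eqxx in PQ.
Qed.

Definition critical F v := exists P Q, [/\ P \in F, Q \in F & twins v P Q].

Definition contract F u := [set P :\ u | P in F].

Lemma critical_subset F G v : F \subset G -> critical F v -> critical G v.
Proof.
by move=> /subsetP FG [P [Q [PF QF PQv]]]; exists P, Q; split; rewrite ?FG.
Qed.

Lemma card_contract_lt F u : critical F u -> #|contract F u| < #|F|.
Proof. by case=> P [Q [PF QF [PQ PQu]]]; apply: card_imset_lt PF QF PQ PQu. Qed.

Lemma contract_critical F u v :
  u != v -> critical F v -> critical (contract F u) v.
Proof.
move=> uv [P [Q [PF QF [PQ PQv]]]]; exists (P :\ u), (Q :\ u).
split; [exact: imset_f | exact: imset_f | split; last by rewrite setD1C PQv setD1C].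
apply: contra_neq PQ => PQu; apply: setD1_eq PQv _.
by have /setP/(_ v) := PQu; rewrite !inE eq_sym uv.
Qed.

(* Bondy's theorem, in contrapositive form. *)
Lemma card_critical_lt F W :
  F != set0 -> {in W, forall v, critical F v} -> #|W| < #|F|.
Proof.
have [n] := ubnP #|W|; elim: n W F => // n IH W F ltWn F0 critW.
have [->|[v vW]] := set_0Vmem W; first by rewrite cards0 card_gt0.
have ltWvn : #|W :\ v| < n by move: ltWn; rewrite (cardsD1 v) vW.
have Fv0 : contract F v != set0 by rewrite imset_eq0.
have critWv : {in W :\ v, forall w, critical (contract F v) w}.
  move=> w; rewrite !inE => /andP[wv wW].
  by apply: contract_critical; [rewrite eq_sym | exact: critW].
rewrite (cardsD1 v) vW.
exact: leq_ltn_trans (IH _ _ ltWvn Fv0 critWv) (card_contract_lt (critW v vW)).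
Qed.

(* Deleting u merges a pair of u-twins and then deleting v would merge two
   pairs of v-twins with different cores, which Bondy's bound forbids. *)
Lemma twins_contract_eq F u v A B C D :
    #|F| <= #|T|.+1 -> (forall w, critical F w) -> u != v ->
    A \in contract F u -> B \in contract F u ->
    C \in contract F u -> D \in contract F u ->
  twins v A B -> twins v C D -> A :\ v = C :\ v.
Proof.
move=> leFT critF uv AF BF CF DF [AB ABv] [CD CDv]; apply/eqP/negPn/negP => ACv.
have ltGF : #|contract F u| < #|F| := card_contract_lt (critF u).
have ltHG : #|contract (contract F u) v|.+1 < #|contract F u|.
  exact: card_imset_lt2 AF BF CF DF AB CD ABv CDv ACv.
have ltWH : #|~: [set u; v]| < #|contract (contract F u) v|.
  apply: card_critical_lt => [|w].
    by rewrite !imset_eq0; case: (critF u) => P [_ [PF _ _]]; apply/set0Pn; exists P.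
  rewrite !inE negb_or => /andP[wu wv].
  by do 2![apply: contract_critical; first by rewrite eq_sym].
have ltWF : #|~: [set u; v]|.+3 < #|F|.
  by apply: leq_ltn_trans ltGF; apply: leq_trans ltHG.
have := leq_trans ltWF leFT; rewrite ltnS -(cardsC [set u; v]) cards2 uv.
lia.
Qed.

End Families.

(* Lets [bigD1] split the minimum defining [gammaOL]. *)
HB.instance Definition _ := SemiGroup.isComLaw.Build nat minn minnA minnC.

Section Neighbourhoods.
Variable T : finType.
Implicit Types (b : rel T) (S : {set T}) (P Q : {set T}).

(* [None] is an extra vertex with empty in-neighbourhood, so that domination
   and separation become a single injectivity condition ([is_OLDE]). *)
Definition inNo b (o : option T) : {set T} :=
  if o is Some v then inN b v else set0.

Definition nbhds b : {set {set T}} := [set inNo b o | o : option T].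

Lemma inNo_nbhds b o : inNo b o \in nbhds b.
Proof. by apply/imsetP; exists o. Qed.

Lemma mem_nbhds b v : inN b v \in nbhds b.
Proof. exact: (inNo_nbhds b (Some v)). Qed.

Lemma set0_nbhds b : set0 \in nbhds b.
Proof. exact: (inNo_nbhds b None). Qed.

Lemma card_nbhds b : #|nbhds b| <= #|T|.+1.
Proof. by rewrite -card_option; apply: leq_imset_card. Qed.

Lemma is_OLDE b S : is_OLD b S = injectiveb (fun o => inNo b o :&: S).
Proof.
apply/andP/injectiveP => [[/forallP dom /forallP sep] | inj].
  have nonempty v : inN b v :&: S != set0.
    have /existsP[u /andP[uS buv]] := dom v.
    by apply/set0Pn; exists u; rewrite !inE buv.
  move=> [v|] [w|] //= E; last 2 first.
  - by have := nonempty v; rewrite E set0I eqxx.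
  - by have := nonempty w; rewrite -E set0I eqxx.
  congr Some; apply: contraTeq isT => vw.
  have /existsP[s /andP[sS]] := implyP (forallP (sep v) w) vw.
  by have /setP/(_ s) := E; rewrite !inE sS !andbT => ->; rewrite eqxx.
split; apply/forallP => v.
  apply/existsP; have /set0Pn[u] : inN b v :&: S != set0.
    by apply/eqP => E; have := inj (Some v) None; rewrite /= set0I => /(_ E).
  by rewrite !inE => /andP[buv uS]; exists u; rewrite uS.
apply/forallP => w; apply/implyP; apply: contraNT => /existsPn sep.
apply/eqP/Some_inj/inj/setP => s /=; have := sep s; rewrite !inE.
by case: (s \in S); rewrite ?andbF ?andbT // negbK => /eqP.
Qed.

Lemma is_OLD_setTP b : reflect (injective (inNo b)) (is_OLD b setT).
Proof.
rewrite is_OLDE; apply: (iffP (injectiveP _)) => inj o1 o2 /= E; apply: inj.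
  by rewrite E.
by rewrite !setIT in E.
Qed.

Lemma is_OLDS b S1 S2 : S1 \subset S2 -> is_OLD b S1 -> is_OLD b S2.
Proof.
rewrite !is_OLDE => /setIidPr S21 /injectiveP inj; apply/injectiveP => o1 o2 E.
by apply: inj; rewrite /= -S21 !setIA E.
Qed.

Lemma locatable_setT b : locatable b -> is_OLD b setT.
Proof. by case=> S; apply: is_OLDS; apply: subsetT. Qed.

Lemma OLD_critical b S v : is_OLD b S -> critical (nbhds b) v -> v \in S.
Proof.
rewrite is_OLDE => /injectiveP inj [_ [_ [/imsetP[o1 _ ->] /imsetP[o2 _ ->]]]].
case=> neq eqv; apply: contraNT neq => vS; apply/eqP; congr inNo; apply: inj.
have trace o : inNo b o :&: S = (inNo b o :\ v) :&: S.
  apply/setP => s; rewrite !inE.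
  by case: (eqVneq s v) => // ->; rewrite (negbTE vS) !andbF.
by rewrite !trace eqv.
Qed.

Lemma critical_of_not_OLD b v :
  is_OLD b setT -> ~~ is_OLD b (setT :\ v) -> critical (nbhds b) v.
Proof.
move=> /is_OLD_setTP inj; rewrite is_OLDE => /injectivePn[o1 [o2 o12]] /=.
rewrite setTD -!setDE => eqv; exists (inNo b o1), (inNo b o2).
by split; rewrite ?inNo_nbhds //; split=> //; apply: contra_neq o12 => /inj.
Qed.

Lemma gammaOL_le b S : is_OLD b S -> gammaOL b <= #|S|.
Proof. by move=> OLD_S; rewrite /gammaOL (bigD1 S) //= geq_minl. Qed.

Lemma gammaOL_geq b k :
  k <= #|T|.+1 -> (forall S, is_OLD b S -> k <= #|S|) -> k <= gammaOL b.
Proof.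
move=> kT kS; rewrite /gammaOL; elim/big_ind: _ => // m1 m2 k1 k2.
by rewrite leq_min k1.
Qed.

Lemma gammaOL_fullP b :
  locatable b -> gammaOL b = #|T| <-> forall v, critical (nbhds b) v.
Proof.
move=> /locatable_setT OLD_T; split=> [gammaT v | crit].
  apply: critical_of_not_OLD => //; apply/negP => /gammaOL_le.
  by rewrite gammaT -cardsT leqNgt proper_card // properD1.
apply/eqP; rewrite eqn_leq -{1}cardsT gammaOL_le //=.
apply: gammaOL_geq => // S /OLD_critical OLD_S.
by rewrite -cardsT subset_leq_card //; apply/subsetP => v _; apply: OLD_S.
Qed.

Lemma forcing_arcP b u y : reflect (forcing_arc b u y) (forcing_arcb b u y).
Proof.
apply: (iffP andP) => -[buy Ny]; split=> //.
  by case/orP: Ny => [/eqP|/existsP[z /eqP]]; [left | right; exists z].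
case: Ny => [->|[z Nz]]; first by rewrite eqxx.
by apply/orP; right; apply/existsP; exists z; rewrite Nz.
Qed.

Lemma forcing_arcbE b u y :
  forcing_arcb b u y = (u \in inN b y) && (inN b y :\ u \in nbhds b).
Proof.
rewrite /forcing_arcb inE; case buy: (b u y) => //=; apply/idP/imsetP.
  case/orP => [/eqP-> | /existsP[z /eqP<-]]; last by exists (Some z).
  by exists None; rewrite //= setDv.
case=> [[z|] _ /= Nz]; first by apply/orP; right; apply/existsP; exists z; rewrite Nz.
by rewrite -[inN b y](@setD1K _ u) ?inE // Nz setU0 eqxx.
Qed.

Lemma forcing_arcE b u y :
  forcing_arc b u y <-> u \in inN b y /\ inN b y :\ u \in nbhds b.
Proof. by rewrite (rwP (forcing_arcP b u y)) forcing_arcbE; split=> /andP. Qed.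

Lemma location_forcedI b v P Q :
    P \in nbhds b -> Q \in nbhds b -> twins v P Q ->
  P != set0 -> Q != set0 -> location_forced b v.
Proof.
move=> /imsetP[[z|] _ ->] /imsetP[[y|] _ ->] twzy; rewrite /= ?eqxx // => _ _.
exists z, y.
case: (twzy) => zy /setP eqv; split; first by apply: contra_neq zy => ->.
apply/setP => s; rewrite /symdiff !inE; have [->|sv] := eqVneq s v.
  by have := twins_mem twzy; rewrite !inE => ->; case: (b v z).
by have := eqv s; rewrite !inE sv /= => ->; case: (b s y).
Qed.

End Neighbourhoods.

Section DeleteNonforcing.
Variables (T : finType) (a : rel T) (x : T).
Implicit Types (P Q : {set T}).
Local Notation a' := (delete_nonforcing_out a x).

Lemma inN_delete y :
  inN a' y = if forcing_arcb a x y then inN a y else inN a y :\ x.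
Proof.
case: ifP => fxy; apply/setP => s; rewrite !inE /delete_nonforcing_out.
  by case: (eqVneq s x) => [->|]; rewrite ?fxy ?andbT.
by case: (eqVneq s x) => [->|]; rewrite ?fxy ?andbT ?andbF.
Qed.

Lemma inNo_delete o :
  inNo a' o = if (x \in inNo a o) && (inNo a o :\ x \in nbhds a)
              then inNo a o else inNo a o :\ x.
Proof. by case: o => [y|] /=; rewrite ?inN_delete ?forcing_arcbE ?inE ?set0D. Qed.

Lemma inNo_deleteD1 o : inNo a' o :\ x = inNo a o :\ x.
Proof. by rewrite inNo_delete; case: ifP => // _; rewrite setDDl setUid. Qed.

Lemma inNo_delete_sub o : inNo a' o \subset inNo a o.
Proof. by rewrite inNo_delete; case: ifP => _; rewrite ?subsetDl. Qed.

Lemma inNo_delete_notin o : x \notin inNo a o -> inNo a' o = inNo a o.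
Proof. by move=> xo; rewrite inNo_delete (negbTE xo) setD1_id. Qed.

Lemma nbhds_delete_notin P : P \in nbhds a -> x \notin P -> P \in nbhds a'.
Proof. by case/imsetP=> o _ -> /inNo_delete_notin <-; apply: inNo_nbhds. Qed.

Lemma nbhds_deleteD1 P : P \in nbhds a -> P :\ x \in nbhds a'.
Proof.
case/imsetP=> o _ ->; have := inNo_delete o; case: ifP => [/andP[_ Px] _ | _ <-].
  by apply: nbhds_delete_notin Px _; rewrite setD11.
exact: inNo_nbhds.
Qed.

Lemma nbhds_delete_keep P : P \in nbhds a -> P :\ x \in nbhds a -> P \in nbhds a'.
Proof.
case/imsetP=> o _ -> Px; have [xo|xo] := boolP (x \in inNo a o).
  by rewrite -[inNo a o](_ : inNo a' o = _) ?inNo_nbhds // inNo_delete xo Px.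
exact: nbhds_delete_notin (inNo_nbhds a o) xo.
Qed.

Lemma nbhds_delete_inv R :
  R \in nbhds a' -> exists2 P, P \in nbhds a & P :\ x = R :\ x.
Proof.
by case/imsetP=> o _ ->; exists (inNo a o); rewrite ?inNo_nbhds ?inNo_deleteD1.
Qed.

Lemma delete_is_OLD : is_OLD a setT -> is_OLD a' setT.
Proof.
move/is_OLD_setTP => inj; apply/is_OLD_setTP.
have mem_x o o' : inNo a' o = inNo a' o' -> inNo a o :\ x = inNo a o' :\ x ->
    x \in inNo a o -> x \in inNo a o'.
  move=> E eqx xo; apply: contraT => xo'.
  have kept : inNo a' o = inNo a o.
    by rewrite inNo_delete xo eqx setD1_id // inNo_nbhds.
  have /subsetP/(_ x) := inNo_delete_sub o'.
  by rewrite -E kept xo (negbTE xo') => /(_ isT).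
move=> o1 o2 E; have eqx : inNo a o1 :\ x = inNo a o2 :\ x.
  by rewrite -!inNo_deleteD1 E.
apply: inj; apply: (setD1_eq eqx); apply/idP/idP; first exact: mem_x.
exact: mem_x (esym E) (esym eqx).
Qed.

Lemma delete_critical v : critical (nbhds a) v -> critical (nbhds a') v.
Proof.
have [<-|xv] := eqVneq x v => crit; last first.
  apply: critical_subset (contract_critical xv crit).
  by apply/subsetP => _ /imsetP[P PN ->]; apply: nbhds_deleteD1.
case: crit => P [Q [PN QN twPQ]]; case: (twPQ) => _ PQx.
have PxN : P :\ x \in nbhds a.
  have [xP|xP] := boolP (x \in P); last by rewrite setD1_id.
  by rewrite PQx setD1_id // (twins_mem twPQ) xP.
exists P, Q; split=> //; apply: nbhds_delete_keep; rewrite -?PQx //.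
Qed.

Lemma forcing_arc_delete_tail y : forcing_arc a x y <-> forcing_arc a' x y.
Proof.
rewrite !forcing_arcE; split=> [[xy Nxy] | [xy' _]].
  have -> : inN a' y = inN a y by rewrite inN_delete forcing_arcbE xy Nxy.
  by split=> //; apply: nbhds_delete_notin Nxy _; rewrite setD11.
apply/andP; rewrite -forcing_arcbE.
by move: xy'; rewrite inE /delete_nonforcing_out eqxx => /andP[].
Qed.

Hypothesis crit : forall v, critical (nbhds a) v.
Hypothesis not_forced : ~ location_forced a x.

Lemma twins_set0 P Q :
  P \in nbhds a -> Q \in nbhds a -> twins x P Q -> P = set0 \/ Q = set0.
Proof.
move=> PN QN twPQ; have [->|P0] := eqVneq P set0; [by left | right].
apply/eqP/negPn/negP => Q0.
exact: not_forced (location_forcedI PN QN twPQ P0 Q0).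
Qed.

Lemma set1_nbhds : [set x] \in nbhds a.
Proof.
have [P [Q [PN QN twPQ]]] := crit x.
wlog P0 : P Q PN QN twPQ / P = set0.
  move=> sym; case: (twins_set0 PN QN twPQ) => [P0|Q0]; first exact: (sym P Q).
  exact: (sym Q P _ _ (twins_sym twPQ)).
case: twPQ => Q0 /esym/eqP; rewrite P0 set0D setD_eq0 subset1.
by case/orP=> /eqP QE; [rewrite -QE | rewrite QE P0 eqxx in Q0].
Qed.

Lemma nbhds_sub1 P : P :\ x = set0 -> P \in nbhds a.
Proof.
move/eqP; rewrite setD_eq0 subset1 => /orP[]/eqP->.
  exact: set1_nbhds.
exact: set0_nbhds.
Qed.

Lemma forcing_tail_set1 y : forcing_arcb a x y -> inN a y = [set x].
Proof.
rewrite forcing_arcbE => /andP[xy Nxy].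
have twN : twins x (inN a y) (inN a y :\ x).
  split; last by rewrite [RHS]setD1_id // setD11.
  by apply: contraTneq xy => ->; rewrite setD11.
case: (twins_set0 (mem_nbhds a y) Nxy twN) => [N0|N0].
  by rewrite N0 inE in xy.
by rewrite -(setD1K xy) N0 setU0.
Qed.

Lemma nbhds_of_delete u P :
  u != x -> P \in nbhds a -> P :\ u :\ x \in nbhds a' -> P :\ u \in nbhds a.
Proof.
move=> ux PN /nbhds_delete_inv[Q QN]; rewrite [RHS]setD1_id ?setD11 // => QPx.
have [<-//|QP] := eqVneq Q (P :\ u).
have uQ : u \notin Q by have /setP/(_ u) := QPx; rewrite !inE eqxx ux /= => ->.
have mem_contract S : S \in nbhds a -> u \notin S -> S \in contract (nbhds a) u.
  by move=> SN uS; rewrite -(setD1_id uS); apply: imset_f.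
have u0 : u \notin set0 by rewrite inE.
have u1 : u \notin [set x] by rewrite inE.
have tw0 : twins x set0 [set x].
  by split; [apply/eqP => /setP/(_ x); rewrite !inE eqxx | rewrite set0D setDv].
have := twins_contract_eq (card_nbhds a) crit ux
  (mem_contract _ (set0_nbhds a) u0) (mem_contract _ set1_nbhds u1)
  (mem_contract _ QN uQ) (imset_f _ PN) tw0 (conj QP QPx).
by rewrite set0D QPx => /esym; apply: nbhds_sub1.
Qed.

Lemma forcing_arc_delete_head u y :
  u != x -> forcing_arc a u y <-> forcing_arc a' u y.
Proof.
move=> ux; have mem_u : (u \in inN a' y) = (u \in inN a y).
  by rewrite !inE /delete_nonforcing_out ux /= andbT.
have Ny' : u \in inN a y -> inN a' y = inN a y :\ x.
  move=> uy; rewrite inN_delete; case: ifP => // /forcing_tail_set1 N1.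
  by rewrite N1 inE (negbTE ux) in uy.
rewrite !forcing_arcE mem_u; split=> -[uy Ny]; split=> //.
  by rewrite Ny' // setD1C; apply: nbhds_deleteD1.
by rewrite Ny' // setD1C in Ny; apply: nbhds_of_delete (mem_nbhds a y) Ny.
Qed.

Lemma forcing_arc_delete u y : forcing_arc a u y <-> forcing_arc a' u y.
Proof.
have [->|ux] := eqVneq u x; first exact: forcing_arc_delete_tail.
exact: forcing_arc_delete_head.
Qed.

End DeleteNonforcing.

Theorem lemma10 (T : finType) (a : rel T) (x : T) :
  locatable a -> gammaOL a = #|T| ->
  let a' := delete_nonforcing_out a x in
  locatable a' /\ gammaOL a' = #|T| /\
  (~ location_forced a x ->
     forall u y, forcing_arc a u y <-> forcing_arc a' u y).
Proof.
move=> loc_a /(gammaOL_fullP loc_a) crit a'.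
have loc_a' : locatable a' by exists setT; apply/delete_is_OLD/locatable_setT.
split=> //; split.
  by apply/(gammaOL_fullP loc_a') => v; apply: delete_critical.
by move=> not_forced u y; apply: forcing_arc_delete.
Qed.
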